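(* Fix an integer $k\geq1$ and $V=\{0,\ldots,k\}$. Let $\varphi$ be a Boolean function on $V$ with $\mathrm{eul}(\varphi)\geq0$. Then there exists a Boolean function $\varphi_{\min}$ on $V$ with $\varphi_{\min}\simeq\varphi$ all of whose satisfying valuations have even size.
   Context: A valuation is a subset $\nu\subseteq V$; $\nu^{(l)}$ is $\nu$ with membership of $l$ flipped. A Boolean function on $V$ is a map $\varphi:2^V\to\{\text{false},\text{true}\}$; $\mathrm{sat}(\varphi)$ is its set of satisfying valuations; $\mathrm{eul}(\varphi)=\sum_{\nu\in\mathrm{sat}(\varphi)}(-1)^{|\nu|}$. Write $\varphi\xrightarrow{+(\nu,l)}\varphi'$ if $\nu,\nu^{(l)}\notin\mathrm{sat}(\varphi)$ and $\mathrm{sat}(\varphi')=\mathrm{sat}(\varphi)\cup\{\nu,\nu^{(l)}\}$, and $\varphi\xrightarrow{-(\nu,l)}\varphi'$ if $\varphi'\xrightarrow{+(\nu,l)}\varphi$. Write $\varphi\xrightarrow{\pm}\varphi'$ if one of these holds for some $\nu,l$; $\simeq$ is the reflexive-transitive closure of $\xrightarrow{\pm}$ (an equivalence relation). *)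

(* V = {0,...,k} is 'I_k.+1; valuations are {set 'I_k.+1}. *)
From mathcomp Require Import all_boot all_order all_algebra.
From Stdlib Require Import Relations.
Set Implicit Arguments. Unset Strict Implicit. Unset Printing Implicit Defensive.
Import GRing.Theory Num.Theory.

Definition bfun (k : nat) := {set 'I_k.+1} -> bool.

Definition flip k (nu : {set 'I_k.+1}) (l : 'I_k.+1) : {set 'I_k.+1} :=
  if l \in nu then nu :\ l else l |: nu.

Definition sat k (phi : bfun k) : {set {set 'I_k.+1}} := [set nu | phi nu].

Definition eul k (phi : bfun k) : int :=
  (\sum_(nu in sat phi) (-1) ^+ #|nu|)%R.

Definition step_plus k (phi phi' : bfun k) (nu : {set 'I_k.+1}) (l : 'I_k.+1) : Prop :=
  nu \notin sat phi /\ flip nu l \notin sat phi /\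
  sat phi' = sat phi :|: [set nu; flip nu l].

Definition step_minus k (phi phi' : bfun k) nu l : Prop := step_plus phi' phi nu l.

Definition step_pm k (phi phi' : bfun k) : Prop :=
  exists nu l, step_plus phi phi' nu l \/ step_minus phi phi' nu l.

Definition bequiv k : relation (bfun k) := clos_refl_trans (bfun k) (@step_pm k).

From mathcomp Require Import all_boot all_order all_algebra.
From Stdlib Require Import Relations.
Import GRing.Theory Num.Theory.

(** A move adds or removes a pair {ν, ν^(l)} of valuations of opposite parities, so it
    changes the numbers of odd and of even satisfying valuations by the same amount, and
    eul φ ≥ 0 says that the even ones are at least as many as the odd ones.  It therefore
    suffices to cancel an odd satisfying valuation ν against an even one μ, by induction on
    their Hamming distance.  Let ν' = ν^(l) and ν'' = ν'^(l') be the first two steps of a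
    shortest path from ν to μ.  If ν' is satisfying, remove {ν, ν'}; if ν'' is, cancel it
    against μ instead; otherwise add {ν', ν''} and remove {ν, ν'}, which slides ν to the
    odd valuation ν'', closer to μ. *)

Set Implicit Arguments. Unset Strict Implicit.

Section PairMoves.
Variable k : nat.
Implicit Types (S T : {set {set 'I_k.+1}}) (nu mu x : {set 'I_k.+1}).
Implicit Types (l : 'I_k.+1) (b : bool).

Lemma mem_flip nu l i : (i \in flip nu l) = if i == l then l \notin nu else i \in nu.
Proof.
by rewrite /flip; case: ifP => nu_l; rewrite !inE; case: eqP => [->|] //=; rewrite nu_l.
Qed.

Lemma odd_flip nu l : odd #|flip nu l| = ~~ odd #|nu|.
Proof.
rewrite /flip; case: ifP => nu_l; last by rewrite cardsU1 nu_l.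
by rewrite (cardsD1 l nu) nu_l negbK.
Qed.

Lemma flip_neq nu l : flip nu l != nu.
Proof. by apply/eqP => E; have := odd_flip nu l; rewrite E; case: odd. Qed.

Definition symdiff nu mu := [set i | (i \in nu) != (i \in mu)].

Lemma symdiff_eq0 nu mu : (symdiff nu mu == set0) = (nu == mu).
Proof.
apply/eqP/eqP => [/setP E | ->]; apply/setP => i; last by rewrite !inE eqxx.
by have := E i; rewrite !inE; case: (i \in nu); case: (i \in mu).
Qed.

Lemma symdiff_flip nu mu l :
  l \in symdiff nu mu -> symdiff (flip nu l) mu = symdiff nu mu :\ l.
Proof.
move=> D_l; apply/setP => i; rewrite !inE mem_flip; case: (i =P l) => [->|] //=.
by move: D_l; rewrite inE; case: (l \in nu); case: (l \in mu).
Qed.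

Lemma card_symdiff_flip nu mu l :
  l \in symdiff nu mu -> #|symdiff (flip nu l) mu| < #|symdiff nu mu|.
Proof. by move=> D_l; rewrite symdiff_flip // (cardsD1 l (symdiff nu mu)) D_l. Qed.

Definition pair_added S T x l :=
  x \notin S /\ flip x l \notin S /\ T = S :|: [set x; flip x l].

Definition pair_move S T := exists x l, pair_added S T x l \/ pair_added T S x l.

Definition pair_moves := clos_refl_trans _ pair_move.

Lemma pair_move_sym S T : pair_move S T -> pair_move T S.
Proof. by case=> x [l [added|removed]]; exists x, l; [right|left]. Qed.

Lemma pair_moves_remove S x l :
  x \in S -> flip x l \in S -> pair_moves S (S :\ x :\ flip x l).
Proof.
move=> S_x S_y; apply: rt_step; exists x, l; right.
split; [|split]; rewrite ?(inE, eqxx, andbF) //.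
apply/setP => z; rewrite !inE.
have [->|_] := eqVneq z x; first by rewrite S_x /= orbT.
have [->|_] := eqVneq z (flip x l); first by rewrite S_y.
by rewrite /= orbF.
Qed.

Lemma pair_moves_slide S x l l' :
  x \in S -> flip x l \notin S -> flip (flip x l) l' \notin S ->
  pair_moves S (flip (flip x l) l' |: S :\ x).
Proof.
set y := flip x l; set z := flip y l' => S_x S_y S_z.
apply: (@rt_trans _ _ _ (S :|: [set y; z])); first by apply: rt_step; exists y, l'; left.
have -> : z |: S :\ x = (S :|: [set y; z]) :\ x :\ y.
  have z_x : z != x by apply: contraNneq S_z => ->.
  apply/setP => w; rewrite !inE.
  have [->|_] := eqVneq w z; first by rewrite flip_neq z_x !orbT.
  have [->|_] := eqVneq w y; first by rewrite (negbTE S_y) andbF.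
  by rewrite /= orbF.
by apply: pair_moves_remove; rewrite !inE ?S_x ?eqxx ?orbT.
Qed.

Definition parity_count b S := (\sum_(x in S) (odd #|x| == b))%N.

Lemma parity_count_setU1 b S x :
  x \notin S -> parity_count b (x |: S) = (odd #|x| == b) + parity_count b S.
Proof. exact: big_setU1. Qed.

Lemma parity_count_setD1 b S x :
  x \in S -> parity_count b S = (odd #|x| == b) + parity_count b (S :\ x).
Proof. exact: big_setD1. Qed.

Lemma parity_count_gt0 b S : (0 < parity_count b S) = [exists x in S, odd #|x| == b].
Proof.
rewrite lt0n sum_nat_eq0 negb_forall; apply: eq_existsb => x.
by case: (x \in S); case: (_ == b).
Qed.

Lemma parity_count_remove b S x l :
  x \in S -> flip x l \in S -> parity_count b S = (parity_count b (S :\ x :\ flip x l)).+1.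
Proof.
move=> S_x S_y; have S'_y : flip x l \in S :\ x by rewrite !inE flip_neq.
rewrite (parity_count_setD1 b S_x) (parity_count_setD1 b S'_y) odd_flip addnA.
by case: odd; case: b.
Qed.

Lemma parity_count_swap b S x z :
  x \in S -> z \notin S -> odd #|z| = odd #|x| ->
  parity_count b (z |: S :\ x) = parity_count b S.
Proof.
move=> S_x S_z odd_zx; rewrite (parity_count_setD1 b S_x) parity_count_setU1 ?odd_zx //.
by rewrite !inE negb_and S_z orbT.
Qed.

Lemma cancel_odd_even n S nu mu :
  #|symdiff nu mu| < n -> nu \in S -> mu \in S -> odd #|nu| -> ~~ odd #|mu| ->
  exists2 T, pair_moves S T & forall b, parity_count b S = (parity_count b T).+1.
Proof.
elim: n S nu => // n IH S nu D_nu S_nu S_mu odd_nu even_mu.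
have [/eqP|[l D_l]] := set_0Vmem (symdiff nu mu).
  by rewrite symdiff_eq0 => /eqP nu_mu; rewrite -nu_mu odd_nu in even_mu.
set y := flip nu l; have [S_y|S_y] := boolP (y \in S).
  exists (S :\ nu :\ y); first exact: pair_moves_remove.
  by move=> b; apply: parity_count_remove.
have [/eqP|[l' D_l']] := set_0Vmem (symdiff y mu).
  by rewrite symdiff_eq0 => /eqP y_mu; rewrite y_mu S_mu in S_y.
set z := flip y l'.
have odd_z : odd #|z| by rewrite !odd_flip negbK.
have D_z : #|symdiff z mu| < n.
  apply: leq_trans (card_symdiff_flip D_l') _; rewrite -ltnS.
  exact: leq_trans (card_symdiff_flip D_l) (ltnW D_nu).
have [S_z|S_z] := boolP (z \in S); first exact: IH D_z S_z S_mu odd_z even_mu.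
have mu_neq_nu : mu != nu by apply: contraNneq even_mu => ->.
have [||T ST count_T] := IH (z |: S :\ nu) z D_z _ _ odd_z even_mu.
- exact: setU11.
- by rewrite !inE mu_neq_nu S_mu orbT.
exists T; first exact: rt_trans (pair_moves_slide S_nu S_y S_z) ST.
by move=> b; rewrite -count_T parity_count_swap // odd_z odd_nu.
Qed.

Lemma pair_moves_to_even S :
  parity_count true S <= parity_count false S ->
  exists2 T, pair_moves S T & {in T, forall x, ~~ odd #|x|}.
Proof.
move count_S: (parity_count true S) => n; elim: n S count_S => [|n IH] S count_S le_S.
  exists S => [|x S_x]; first exact: rt_refl.
  apply/negP => odd_x; suff : 0 < parity_count true S by rewrite count_S.
  by rewrite parity_count_gt0; apply/existsP; exists x; rewrite S_x odd_x.
have /existsP[nu /andP[S_nu /eqP odd_nu]] : [exists x in S, odd #|x| == true].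
  by rewrite -parity_count_gt0 count_S.
have /existsP[mu /andP[S_mu /eqP even_mu]] : [exists x in S, odd #|x| == false].
  by rewrite -parity_count_gt0 (leq_trans _ le_S) ?count_S.
have [T ST count_T] := cancel_odd_even (ltnSn _) S_nu S_mu odd_nu (negbT even_mu).
have [||U TU even_U] := IH T.
- by apply/eqP; rewrite -eqSS -count_T count_S.
- by rewrite -ltnS -!count_T.
by exists U => //; exact: rt_trans ST TU.
Qed.

Lemma sat_mem S : sat (fun nu => nu \in S) = S.
Proof. by apply/setP => nu; rewrite inE. Qed.

Lemma pair_moves_bequiv (phi : bfun k) T :
  pair_moves (sat phi) T -> exists2 psi : bfun k, sat psi = T & bequiv psi phi.
Proof.
move/clos_rt_rtn1_iff; elim => [|U W UW _ [psi sat_psi psi_phi]].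
  by exists phi => //; exact: rt_refl.
pose psiW : bfun k := fun nu => nu \in W.
exists psiW; first exact: sat_mem.
apply: rt_trans psi_phi; apply: rt_step.
change (pair_move (sat psiW) (sat psi)); rewrite sat_mem sat_psi.
exact: pair_move_sym.
Qed.

Lemma eul_parity_count (phi : bfun k) :
  eul phi = ((parity_count false (sat phi))%:R - (parity_count true (sat phi))%:R)%R.
Proof.
rewrite /eul !natr_sum -sumrB; apply: eq_bigr => nu _.
by rewrite -signr_odd; case: odd.
Qed.

End PairMoves.

Theorem lemma6p5 (k : nat) (hk : (1 <= k)%N) (phi : bfun k)
  (heul : (0 <= eul phi)%R) :
  exists phimin : bfun k, bequiv phimin phi /\
    (forall nu, nu \in sat phimin -> ~~ odd #|nu|).
Proof.
have le_counts : (parity_count true (sat phi) <= parity_count false (sat phi))%N.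
  by rewrite -(ler_nat int) -subr_ge0 -eul_parity_count.
have [T phi_T even_T] := pair_moves_to_even le_counts.
have [psi sat_psi psi_phi] := pair_moves_bequiv phi_T.
by exists psi; split; rewrite // sat_psi.
Qed.
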